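(* Let $\mathcal N_1,\mathcal N_2,\mathcal N_3$ be nested graphs. If $\mu_1:\mathcal N_1\to\mathcal N_2$ and $\mu_2:\mathcal N_2\to\mathcal N_3$ are mergers, then $\mu_2\circ\mu_1$ is a merger. If $\kappa_1:\mathcal N_1\to\mathcal N_2$ and $\kappa_2:\mathcal N_2\to\mathcal N_3$ are contractions, then $\kappa_2\circ\kappa_1$ is a contraction.
   Context: A nested graph is a small category $\mathcal N$ for which there exists at least one functor $G:\mathcal N\to\underline n$ to a finite ordinal $\underline n$ (viewed as the category with a unique morphism $i\to j$ when $i\le j$ and none otherwise) sending every non-identity morphism to a non-identity morphism. Objects are called nodes. A flag is a non-identity morphism, said to be decorated by its domain. A flag is irreducible if it is not a composite of two flags. A vertex of a nested graph is a node that is not the domain of any flag; a corolla is a nested graph with exactly one vertex. A functor $\phi$ contracts a flag $f$ if $\phi(f)$ is an identity. A functor $\phi:\mathcal N_1\to\mathcal N_2$ between nested graphs is admissible if (1) for every irreducible flag $f$ of $\mathcal N_1$, $\phi(f)$ is an identity or an irreducible flag, and (2) for every irreducible flag $f:A\to B$ of $\mathcal N_1$ contracted by $\phi$, $\phi$ contracts every irreducible flag with domain $A$. An epi-functor $\phi:\mathcal N_1\to\mathcal N_2$ is a functor whose image generates all of $\mathcal N_2$ (every morphism of $\mathcal N_2$ is a composite of images of morphisms of $\mathcal N_1$). A merger is an admissible epi-functor $\mu:\mathcal N_1\to\mathcal N_2$ such that $\mathcal N_2$ is a quotient of $\mathcal N_1$ by an equivalence relation on the objects of $\mathcal N_1$.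 A contraction is an admissible epi-functor $\kappa:\mathcal N_1\to\mathcal N_2$ such that for every node $A_2$ of $\mathcal N_2$ the fiber $\kappa^{-1}(A_2)$ (the subcategory of $\mathcal N_1$ of objects mapped to $A_2$ and morphisms mapped to the identity of $A_2$) is a corolla. *)

From mathcomp Require Import all_boot.
Set Implicit Arguments. Unset Strict Implicit. Unset Printing Implicit Defensive.

Record Cat := {
  Obj :> Type;
  Hom : Obj -> Obj -> Type;
  idm : forall A, Hom A A;
  comp : forall A B C, Hom B C -> Hom A B -> Hom A C;
  comp_idl : forall A B (f : Hom A B), comp (idm B) f = f;
  comp_idr : forall A B (f : Hom A B), comp f (idm A) = f;
  comp_assoc : forall A B C D (h : Hom C D) (g : Hom B C) (f : Hom A B),
      comp h (comp g f) = comp (comp h g) f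
}.
Arguments Hom {c} _ _.
Arguments idm {c} A.
Arguments comp {c A B C} _ _.

Definition hcast (C : Cat) (a b a' b' : C) (ea : a = a') (eb : b = b')
  (f : Hom a b) : Hom a' b' :=
  eq_rect b (fun y => Hom a' y) (eq_rect a (fun x => Hom x b) f a' ea) b' eb.

Definition is_id (C : Cat) (A B : C) (f : Hom A B) : Prop :=
  exists e : A = B, eq_rect A (fun X => Hom X B) f B e = idm B.

Record Functor (C D : Cat) := {
  fobj :> C -> D;
  fmap : forall A B, Hom A B -> Hom (fobj A) (fobj B);
  fmap_id : forall A, fmap (idm A) = idm (fobj A);
  fmap_comp : forall A B E (g : Hom B E) (f : Hom A B),
      fmap (comp g f) = comp (fmap g) (fmap f)
}.
Arguments fmap {C D} _ {A B} _.

Definition fcomp (C D E : Cat) (G : Functor D E) (F : Functor C D) : Functor C E.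
Proof.
refine {| fobj := fun A => G (F A);
          fmap := fun A B f => fmap G (fmap F f) |}.
- by move=> A; rewrite !fmap_id.
- by move=> A B X g f; rewrite !fmap_comp.
Defined.

Definition functor_eq (C D : Cat) (F G : Functor C D) : Prop :=
  exists e : forall A, F A = G A,
    forall A B (f : Hom A B), hcast (e A) (e B) (fmap F f) = fmap G f.

Definition ordcat (n : nat) : Cat.
Proof.
refine {| Obj := 'I_n;
          Hom := fun i j => is_true (nat_of_ord i <= nat_of_ord j);
          idm := fun i => leqnn i;
          comp := fun i j k (g : j <= k) (f : i <= j) => leq_trans f g |}.
- by move=> *; apply: bool_irrelevance.
- by move=> *; apply: bool_irrelevance.
- by move=> *; apply: bool_irrelevance.
Defined.

Definition is_nested (C : Cat) : Prop :=
  exists (n : nat) (G : Functor C (ordcat n)),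
    forall A B (f : Hom A B), ~ is_id f -> ~ is_id (fmap G f).

Record NestedGraph := {
  ng_cat :> Cat;
  ng_nested : is_nested ng_cat
}.

Section Notions.
Variable C : Cat.

(** a flag is a non-identity morphism (decorated by its domain) *)
Definition flag (A B : C) (f : Hom A B) : Prop := ~ is_id f.

Definition irreducible (A B : C) (f : Hom A B) : Prop :=
  flag f /\ ~ exists (X : C) (g : Hom A X) (h : Hom X B),
      flag g /\ flag h /\ f = comp h g.

Definition vertex (A : C) : Prop := forall B (f : Hom A B), ~ flag f.

Definition corolla : Prop := exists v, vertex v /\ forall w, vertex w -> w = v.
End Notions.

Section Functors.
Variables C D : Cat.
Implicit Type phi : Functor C D.

Definition contracts phi (A B : C) (f : Hom A B) : Prop := is_id (fmap phi f).

Definition admissible phi : Prop :=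
  (forall A B (f : Hom A B), irreducible f ->
     is_id (fmap phi f) \/ irreducible (fmap phi f)) /\
  (forall A B (f : Hom A B), irreducible f -> contracts phi f ->
     forall B' (f' : Hom A B'), irreducible f' -> contracts phi f').

Inductive generated phi : forall X Y : D, Hom X Y -> Prop :=
| gen_img : forall A B (f : Hom A B), generated phi (fmap phi f)
| gen_id : forall X, generated phi (idm X)
| gen_comp : forall X Y Z (g : Hom Y Z) (f : Hom X Y),
    generated phi f -> generated phi g -> generated phi (comp g f).

Definition epi_functor phi : Prop :=
  forall X Y (g : Hom X Y), generated phi g.

Definition extends_along phi (E : Cat) (F : Functor C E) (G : Functor D E) : Prop :=
  functor_eq (fcomp G phi) F.

Definition is_quotient_by phi (R : C -> C -> Prop) : Prop :=
  (forall A, R A A) /\ (forall A B, R A B -> R B A) /\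
      (forall A B E, R A B -> R B E -> R A E) /\
      (forall A B, R A B <-> phi A = phi B) /\
      (forall X : D, exists A, phi A = X) /\
      (forall (E : Cat) (F : Functor C E),
         (forall A B, R A B -> F A = F B) ->
         (exists G, extends_along phi F G) /\
         (forall G1 G2, extends_along phi F G1 -> extends_along phi F G2 ->
            functor_eq G1 G2)).

Definition merger phi : Prop :=
  [/\ admissible phi, epi_functor phi & exists R, is_quotient_by phi R].

(** the fiber of phi over X (objects sent to X, morphisms sent to the
    identity of X) is a corolla: it has exactly one vertex *)
Definition fiber_vertex phi (X : D) (A : C) : Prop :=
  phi A = X /\ forall B (f : Hom A B), contracts phi f -> ~ flag f.

Definition fiber_is_corolla phi (X : D) : Prop :=
  exists v, fiber_vertex phi X v /\ forall w, fiber_vertex phi X w -> w = v.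

Definition contraction phi : Prop :=
  [/\ admissible phi, epi_functor phi & forall X : D, fiber_is_corolla phi X].
End Functors.

From Stdlib Require Import Classical.
From Pilot Require Import Defs.
From mathcomp Require Import all_boot zify.
Set Implicit Arguments. Unset Strict Implicit. Unset Printing Implicit Defensive.

(* Admissibility and being an epi-functor compose directly, and the composite
   of two quotient functors is the quotient by "same image": a functor
   constant on that relation factors through the first quotient and then
   through the second.
   For contractions k1, k2, the composite fiber over X contains the vertex v of
   the k1-fiber over the vertex of the k2-fiber over X.  Conversely, if w is a
   vertex of the composite fiber, then k1 w is a vertex of the k2-fiber: a
   k2-contracted flag out of k1 w is a composite of images of k1, so some
   morphism h out of the k1-fiber of k1 w has k1 h a k2-contracted flag.
   Factoring h as a k1-contracted part followed by an irreducible flag i not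
   contracted by k1, admissibility forces the domain of i to be a vertex of the
   k1-fiber, i.e. w itself, and then i contradicts w being a vertex. *)

Lemma is_id_idm (C : Cat) (A : C) : is_id (idm A).
Proof. by exists erefl. Qed.

Lemma is_id_fmap (C D : Cat) (F : Functor C D) (A B : C) (f : Hom A B) :
  is_id f -> is_id (fmap F f).
Proof. by case=> e; destruct e => /= ->; rewrite fmap_id; apply: is_id_idm. Qed.

Lemma is_id_comp (C : Cat) (A B E : C) (f : Hom A B) (g : Hom B E) :
  is_id f -> is_id g -> is_id (Defs.comp g f).
Proof.
case=> e; destruct e => /= -> [e]; destruct e => /= ->.
by rewrite comp_idl; apply: is_id_idm.
Qed.

Lemma is_id_endpoints (C : Cat) (A B : C) (f : Hom A B) : is_id f -> A = B.
Proof. by case. Qed.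

Lemma is_nested_rank (C : Cat) : is_nested C ->
  exists r : C -> nat,
    (forall A B (f : Hom A B), r A <= r B) /\
    (forall A B (f : Hom A B), flag f -> r A < r B).
Proof.
case=> n [G HG]; exists (fun A => nat_of_ord (G A)); split=> A B f.
  exact: (fmap G f).
move=> flag_f; rewrite ltn_neqAle (fmap G f) andbT; apply/eqP => /val_inj eGAB.
by apply: (HG _ _ f flag_f); exists eGAB; apply: bool_irrelevance.
Qed.

Section NestedGraphFacts.
Variable C : NestedGraph.

Lemma loop_is_id (A B : C) (f : Hom A B) (g : Hom B A) : is_id f.
Proof.
have [r [r_mono r_flag]] := is_nested_rank (ng_nested C).
apply: NNPP => flag_f.
by have := leq_trans (r_flag _ _ f flag_f) (r_mono _ _ g); rewrite ltnn.
Qed.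

Lemma is_id_compP (A B E : C) (f : Hom A B) (g : Hom B E) :
  is_id (Defs.comp g f) -> is_id f /\ is_id g.
Proof. by case=> e _; subst E; split; [apply: loop_is_id g | apply: loop_is_id f]. Qed.

Lemma not_irreducible_factor (A B : C) (f : Hom A B) :
  flag f -> ~ irreducible f ->
  exists X (g : Hom A X) (h : Hom X B), [/\ flag g, flag h & f = Defs.comp h g].
Proof.
move=> flag_f not_irr; apply: NNPP => no_factor; apply: not_irr; split=> //.
by case=> X [g [h [fg [fh ef]]]]; apply: no_factor; exists X, g, h.
Qed.

Lemma flag_irreducible_factor (A B : C) (f : Hom A B) : flag f ->
  exists Z (i : Hom A Z) (t : Hom Z B), irreducible i /\ f = Defs.comp t i.
Proof.
have [r [_ r_flag]] := is_nested_rank (ng_nested C).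
have [d] := ubnP (r B - r A); elim: d B f => // d IH B f gap flag_f.
case: (classic (irreducible f)) => [irr_f | not_irr].
  by exists B, f, (idm B); rewrite comp_idl.
have [X [g [h [fg fh ->]]]] := not_irreducible_factor flag_f not_irr.
have lt_AX := r_flag _ _ g fg; have lt_XB := r_flag _ _ h fh.
have [|Z [i [t [irr_i ->]]]] := IH X g _ fg; first by lia.
by exists Z, i, (Defs.comp h t); rewrite comp_assoc.
Qed.

Lemma uncontracted_irreducible_factor (D : Cat) (F : Functor C D)
    (A B : C) (h : Hom A B) : ~ contracts F h ->
  exists Z Z' (c : Hom A Z) (i : Hom Z Z') (t : Hom Z' B),
    [/\ contracts F c, irreducible i, ~ contracts F i & h = Defs.comp t (Defs.comp i c)].
Proof.
have [r [r_mono r_flag]] := is_nested_rank (ng_nested C).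
have [d] := ubnP (r B - r A); elim: d A h => // d IH A h gap unc_h.
have flag_h : flag h by move=> id_h; apply: unc_h; apply: is_id_fmap.
have [X [i [t [irr_i eh]]]] := flag_irreducible_factor flag_h.
case: (classic (contracts F i)) => [con_i | unc_i]; last first.
  exists A, X, (idm A), i, t; split=> //; last by rewrite comp_idr.
  exact: is_id_fmap (is_id_idm A).
have unc_t : ~ contracts F t.
  by move=> con_t; apply: unc_h; rewrite /contracts eh fmap_comp; apply: is_id_comp.
have lt_AX := r_flag _ _ i irr_i.1; have le_XB := r_mono _ _ t.
have [|Z [Z' [c [i' [t' [con_c irr_i' unc_i' et]]]]]] := IH X t _ unc_t.
  by lia.
exists Z, Z', (Defs.comp c i), i', t'; split=> //.
  by rewrite /contracts fmap_comp; apply: is_id_comp.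
by rewrite eh et -!comp_assoc.
Qed.
End NestedGraphFacts.

Lemma admissible_comp (C D E : Cat) (F : Functor C D) (H : Functor D E) :
  admissible F -> admissible H -> admissible (fcomp H F).
Proof.
case=> F_irr F_con [H_irr H_con]; split.
- move=> A B f irr_f; case: (F_irr _ _ f irr_f) => [id_Ff | irr_Ff].
    by left; exact: (is_id_fmap H id_Ff).
  exact: H_irr irr_Ff.
- move=> A B f irr_f con_f B' f' irr_f'.
  case: (F_irr _ _ f irr_f) => [id_Ff | irr_Ff].
    exact: is_id_fmap (F_con _ _ f irr_f id_Ff _ f' irr_f').
  case: (F_irr _ _ f' irr_f') => [id_Ff' | irr_Ff']; first exact: (is_id_fmap H id_Ff').
  exact: H_con irr_Ff con_f _ _ irr_Ff'.
Qed.

Lemma generated_fmap (C D E : Cat) (F : Functor C D) (H : Functor D E)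
    (X Y : D) (g : Hom X Y) :
  generated F g -> generated (fcomp H F) (fmap H g).
Proof.
elim=> {X Y g} [A B f | X | X Y Z g f _ IHf _ IHg].
- exact: (gen_img (fcomp H F) f).
- by rewrite fmap_id; apply: gen_id.
- by rewrite fmap_comp; apply: gen_comp.
Qed.

Lemma epi_functor_comp (C D E : Cat) (F : Functor C D) (H : Functor D E) :
  epi_functor F -> epi_functor H -> epi_functor (fcomp H F).
Proof.
move=> epi_F epi_H X Y g; elim: (epi_H X Y g) => {X Y g}.
- by move=> A B f; apply: generated_fmap.
- by move=> X; apply: gen_id.
- by move=> X Y Z g f _ IHf _ IHg; apply: gen_comp.
Qed.

Lemma hcast_trans (C : Cat) (a b a1 b1 a2 b2 : C) (e1 : a = a1) (e1' : b = b1)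
    (e2 : a1 = a2) (e2' : b1 = b2) (f : Hom a b) :
  hcast e2 e2' (hcast e1 e1' f) = hcast (etrans e1 e2) (etrans e1' e2') f.
Proof. by destruct e1, e1', e2, e2'. Qed.

Lemma hcastK (C : Cat) (a b a1 b1 : C) (e : a = a1) (e' : b = b1) (f : Hom a b) :
  hcast (esym e) (esym e') (hcast e e' f) = f.
Proof. by destruct e, e'. Qed.

Lemma functor_eq_refl (C D : Cat) (F : Functor C D) : functor_eq F F.
Proof. by exists (fun A => erefl). Qed.

Lemma functor_eq_sym (C D : Cat) (F G : Functor C D) :
  functor_eq F G -> functor_eq G F.
Proof.
case=> e EFG; exists (fun A => esym (e A)) => A B f.
by rewrite -(EFG A B f) hcastK.
Qed.

Lemma functor_eq_trans (C D : Cat) (F G H : Functor C D) :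
  functor_eq F G -> functor_eq G H -> functor_eq F H.
Proof.
case=> e1 E1 [e2 E2]; exists (fun A => etrans (e1 A) (e2 A)) => A B f.
by rewrite -hcast_trans E1 E2.
Qed.

Lemma functor_eq_compr (C D E : Cat) (F : Functor C D) (H1 H2 : Functor D E) :
  functor_eq H1 H2 -> functor_eq (fcomp H1 F) (fcomp H2 F).
Proof. by case=> e EH; exists (fun A => e (F A)) => A B f; apply: EH. Qed.

Lemma fcompA (C D E K : Cat) (F : Functor C D) (G : Functor D E)
    (H : Functor E K) :
  functor_eq (fcomp H (fcomp G F)) (fcomp (fcomp H G) F).
Proof. by exists (fun A => erefl). Qed.

Lemma extends_along_comp (C D E K : Cat) (F : Functor C D) (G : Functor D E)
    (P : Functor C K) (Q : Functor D K) (H : Functor E K) :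
  extends_along F P Q -> extends_along G Q H -> extends_along (fcomp G F) P H.
Proof.
move=> ext_F ext_G; apply: functor_eq_trans (fcompA _ _ _) _.
exact: functor_eq_trans (functor_eq_compr F ext_G) ext_F.
Qed.

Lemma is_quotient_by_comp (C D E : Cat) (m1 : Functor C D) (m2 : Functor D E)
    (R1 : C -> C -> Prop) (R2 : D -> D -> Prop) :
  is_quotient_by m1 R1 -> is_quotient_by m2 R2 ->
  is_quotient_by (fcomp m2 m1) (fun A B => m2 (m1 A) = m2 (m1 B)).
Proof.
case=> _ [_ [_ [R1E [m1_surj m1_univ]]]] [_ [_ [_ [R2E [m2_surj m2_univ]]]]].
do 4 (split; first by [| move=> ? ? -> | move=> ? ? ? -> ->]).
split.
  move=> X; have [Y <-] := m2_surj X; have [A <-] := m1_surj Y.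
  by exists A.
move=> K P P_const.
have P_const1 : forall A B, R1 A B -> P A = P B.
  by move=> A B /R1E eAB; apply: P_const; rewrite eAB.
have [[G1 ext1] G1_uniq] := m1_univ K P P_const1.
have G1_const : forall X Y, R2 X Y -> G1 X = G1 Y.
  move=> X Y; have [A <-] := m1_surj X; have [B <-] := m1_surj Y.
  case: ext1 => e _ /R2E m2AB; move: (e A) (e B) => /= -> ->.
  exact: P_const.
have [[G2 ext2] _] := m2_univ K G1 G1_const.
split; first by exists G2; apply: extends_along_comp ext1 ext2.
move=> H1 H2 ext_H1 ext_H2.
have H1m2_const : forall X Y, R2 X Y -> fcomp H1 m2 X = fcomp H1 m2 Y.
  by move=> X Y /R2E /= ->.
have [_ uniq2] := m2_univ K (fcomp H1 m2) H1m2_const.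
apply: uniq2; first exact: functor_eq_refl.
apply: functor_eq_sym; apply: G1_uniq.
- exact: functor_eq_trans (functor_eq_sym (fcompA _ _ _)) ext_H1.
- exact: functor_eq_trans (functor_eq_sym (fcompA _ _ _)) ext_H2.
Qed.

Lemma merger_comp (C D E : Cat) (m1 : Functor C D) (m2 : Functor D E) :
  merger m1 -> merger m2 -> merger (fcomp m2 m1).
Proof.
case=> adm1 epi1 [R1 q1] [adm2 epi2 [R2 q2]]; split.
- exact: admissible_comp.
- exact: epi_functor_comp.
- by eexists; apply: is_quotient_by_comp q1 q2.
Qed.

Lemma irreducible_uncontracted_fiber_vertex (C D : NestedGraph)
    (F : Functor C D) (A B : C) (i : Hom A B) :
  admissible F -> irreducible i -> ~ contracts F i -> fiber_vertex F (F A) A.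
Proof.
case=> _ F_con irr_i unc_i; split=> // B' c con_c flag_c.
have [Z [i' [t [irr_i' ec]]]] := flag_irreducible_factor flag_c.
move: con_c; rewrite /contracts ec fmap_comp => /is_id_compP [con_i' _].
exact/unc_i/(F_con _ _ i' irr_i' con_i' _ i irr_i).
Qed.

Lemma fiber_vertex_unique (C D : Cat) (F : Functor C D) (Y : D) (v w : C) :
  fiber_is_corolla F Y -> fiber_vertex F Y v -> fiber_vertex F Y w -> v = w.
Proof. by case=> u [_ u_uniq] /u_uniq -> /u_uniq ->. Qed.

Section CompositeFiber.
Variables (C D E : NestedGraph) (k1 : Functor C D) (k2 : Functor D E).
Hypotheses (k1_adm : admissible k1) (k1_epi : epi_functor k1).
Hypothesis k1_fiber : forall Y, fiber_is_corolla k1 Y.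

Variables (X : E) (w : C).
Hypothesis w_vertex : fiber_vertex (fcomp k2 k1) X w.

Lemma fiber_vertex_comp_k1 : fiber_vertex k1 (k1 w) w.
Proof.
split=> // B f con_f; apply: w_vertex.2.
exact: (is_id_fmap k2 con_f).
Qed.

Lemma fmap_k1_flag_uncontracted (A B : C) (h : Hom A B) :
  k1 A = k1 w -> flag (fmap k1 h) -> ~ contracts k2 (fmap k1 h).
Proof.
move=> k1A flag_k1h con_k1h.
have [Z [Z' [c [i [t [con_c irr_i unc_i eh]]]]]] :=
  uncontracted_irreducible_factor (F := k1) flag_k1h.
have Zw : Z = w.
  apply: fiber_vertex_unique (k1_fiber (k1 w)) _ fiber_vertex_comp_k1.
  rewrite -k1A (is_id_endpoints con_c).
  exact: irreducible_uncontracted_fiber_vertex irr_i unc_i.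
subst Z; move: con_k1h; rewrite /contracts eh !fmap_comp.
case/is_id_compP => /is_id_compP [_ con_i] _.
by case: w_vertex => _ /(_ _ i con_i); apply; case: irr_i.
Qed.

Lemma generated_contracted_not_flag (X' Y : D) (g : Hom X' Y) :
  generated k1 g -> X' = k1 w -> contracts k2 g -> ~ flag g.
Proof.
elim=> {X' Y g} [A B f | X' | X' Y Z g f _ IHf _ IHg] eX.
- by move=> con flag; apply: fmap_k1_flag_uncontracted flag con.
- by move=> _; apply; apply: is_id_idm.
- rewrite /contracts fmap_comp => /is_id_compP [con_f con_g] flag_gf.
  case: (classic (is_id f)) => [id_f | flag_f]; last exact: IHf flag_f.
  apply: IHg con_g _; first by rewrite -(is_id_endpoints id_f).
  by move=> id_g; apply: flag_gf; apply: is_id_comp.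
Qed.

Lemma fiber_vertex_k2_image : fiber_vertex k2 X (k1 w).
Proof.
split; first by case: w_vertex.
by move=> Y g; apply: generated_contracted_not_flag.
Qed.
End CompositeFiber.

Lemma fiber_is_corolla_comp (C D E : NestedGraph) (k1 : Functor C D)
    (k2 : Functor D E) (X : E) :
  contraction k1 -> contraction k2 -> fiber_is_corolla (fcomp k2 k1) X.
Proof.
case=> k1_adm k1_epi k1_fiber [_ _ k2_fiber].
have [w2 [[k2w2 w2_vertex] w2_uniq]] := k2_fiber X.
have [v [[k1v v_vertex] v_uniq]] := k1_fiber w2.
exists v; split.
  split=> [|B f con_f flag_f]; first by rewrite /= k1v.
  apply: (v_vertex B f) flag_f; apply: NNPP => flag_k1f.
  by subst w2; apply: (w2_vertex _ (fmap k1 f)) flag_k1f.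
move=> w w_vertex; apply: v_uniq.
rewrite -(w2_uniq _ (fiber_vertex_k2_image k1_adm k1_epi k1_fiber w_vertex)).
exact: fiber_vertex_comp_k1 w_vertex.
Qed.

Lemma contraction_comp (C D E : NestedGraph) (k1 : Functor C D)
    (k2 : Functor D E) :
  contraction k1 -> contraction k2 -> contraction (fcomp k2 k1).
Proof.
move=> c1 c2; case: (c1) (c2) => adm1 epi1 _ [adm2 epi2 _]; split.
- exact: admissible_comp.
- exact: epi_functor_comp.
- by move=> X; apply: fiber_is_corolla_comp.
Qed.

Theorem mainTheorem2 (N1 N2 N3 : NestedGraph) :
  (forall (mu1 : Functor N1 N2) (mu2 : Functor N2 N3),
      merger mu1 -> merger mu2 -> merger (fcomp mu2 mu1)) /\
  (forall (k1 : Functor N1 N2) (k2 : Functor N2 N3),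
      contraction k1 -> contraction k2 -> contraction (fcomp k2 k1)).
Proof.
split=> [mu1 mu2 | k1 k2]; [exact: merger_comp | exact: contraction_comp].
Qed.
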